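(* Let $A\in\mathcal A_n$ and $i<j$, $k<l$ in $[n]$. If $R_{ij}^{kl}\in E(A)$, then $\widetilde A+\widetilde R_{ij}^{kl}$ is the corner sum matrix of a (unique) ASM in $\mathcal A_n$; if $R_{ij}^{kl}\in E^*(A)$, then $\widetilde A-\widetilde R_{ij}^{kl}$ is the corner sum matrix of a (unique) ASM in $\mathcal A_n$. Moreover the operator $r_{ij}^{kl}$ is an involution: $r_{ij}^{kl}(r_{ij}^{kl}(A))=A$ for all $A\in\mathcal A_n$.
   Context: An $n\times n$ matrix $A=(a_{ij})$ is an alternating sign matrix (ASM) if all $a_{ij}\in\{-1,0,1\}$, all partial row sums $\sum_{k\le j}a_{ik}$ and partial column sums $\sum_{k\le i}a_{kj}$ lie in $\{0,1\}$, and every full row sum and column sum equals $1$; $\mathcal A_n$ is the set of $n\times n$ ASMs. The corner sum matrix is $\widetilde A(i,j)=\sum_{p\le i,q\le j}a_{pq}$, with $\widetilde A(i,j)=0$ if $i=0$ or $j=0$. For $i<j$, $k<l$ in $[n]$, $R_{ij}^{kl}=\{(p,q): i\le p<j,\ k\le q<l\}$ and $\widetilde R_{ij}^{kl}$ is the $n\times n$ $0/1$ matrix with $1$ exactly at positions in $R_{ij}^{kl}$. $E(A)$ is the set of essential rectangles of $A$: those $R_{ij}^{kl}$ such that for all $(p,q)\in R_{ij}^{kl}$: $\widetilde A(p,k)=\widetilde A(p,k-1)$, $\widetilde A(p,l)=\widetilde A(p,l-1)+1$, $\widetilde A(i,q)=\widetilde A(i-1,q)$, $\widetilde A(j,q)=\widetilde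 A(j-1,q)+1$. $E^*(A)$ is the set of dual essential rectangles: those $R_{ij}^{kl}$ such that for all $(p,q)\in R_{ij}^{kl}$: $\widetilde A(p,k)=\widetilde A(p,k-1)+1$, $\widetilde A(p,l)=\widetilde A(p,l-1)$, $\widetilde A(i,q)=\widetilde A(i-1,q)+1$, $\widetilde A(j,q)=\widetilde A(j-1,q)$. The rectangular operator $r_{ij}^{kl}:\mathcal A_n\to\mathcal A_n$ sends $A$ to the ASM whose corner sum matrix is $\widetilde A+\widetilde R_{ij}^{kl}$ if $R_{ij}^{kl}\in E(A)$, $\widetilde A-\widetilde R_{ij}^{kl}$ if $R_{ij}^{kl}\in E^*(A)$, and $\widetilde A$ otherwise. *)

From HB Require Import structures.
From mathcomp Require Import all_boot all_order all_algebra.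
Set Implicit Arguments. Unset Strict Implicit. Unset Printing Implicit Defensive.
Import Order.TTheory GRing.Theory Num.Theory.
Local Open Scope ring_scope.

(* Conventions: the paper's index set [n] = {1,...,n}; the entry a_{pq}
   (1-based) is stored as A (p-1) (q-1) for A : 'M[int]_n (0-based ordinals). *)

Definition is_asm (n : nat) (A : 'M[int]_n) : Prop :=
  [/\ (forall p q : 'I_n, A p q \in [:: -1; 0; 1]),
      (forall p q : 'I_n, \sum_(q' < n | (q' <= q)%N) A p q' \in [:: 0; 1]),
      (forall p q : 'I_n, \sum_(p' < n | (p' <= p)%N) A p' q \in [:: 0; 1]),
      (forall p : 'I_n, \sum_(q < n) A p q = 1) &
      (forall q : 'I_n, \sum_(p < n) A p q = 1)].

(* Corner sum  Atil(i,j) = sum_{p <= i, q <= j} a_{pq}  (1-based i, j);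
   it is 0 when i = 0 or j = 0. *)
Definition cs (n : nat) (A : 'M[int]_n) (i j : nat) : int :=
  \sum_(p < n | (p < i)%N) \sum_(q < n | (q < j)%N) A p q.

Definition csm (n : nat) (A : 'M[int]_n) : 'M[int]_n :=
  \matrix_(p < n, q < n) cs A p.+1 q.+1.

(* Membership of the (1-based) position (p,q) in R_{ij}^{kl}. *)
Definition inR (i j k l p q : nat) : bool :=
  [&& (i <= p)%N, (p < j)%N, (k <= q)%N & (q < l)%N].

Definition Rt (n i j k l : nat) : 'M[int]_n :=
  \matrix_(p < n, q < n) (inR i j k l p.+1 q.+1)%:Z.

Definition essential (n : nat) (A : 'M[int]_n) (i j k l : nat) : bool :=
  [forall p : 'I_n, forall q : 'I_n, inR i j k l p.+1 q.+1 ==>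
    [&& cs A p.+1 k == cs A p.+1 k.-1,
        cs A p.+1 l == cs A p.+1 l.-1 + 1,
        cs A i q.+1 == cs A i.-1 q.+1 &
        cs A j q.+1 == cs A j.-1 q.+1 + 1]].

Definition dual_essential (n : nat) (A : 'M[int]_n) (i j k l : nat) : bool :=
  [forall p : 'I_n, forall q : 'I_n, inR i j k l p.+1 q.+1 ==>
    [&& cs A p.+1 k == cs A p.+1 k.-1 + 1,
        cs A p.+1 l == cs A p.+1 l.-1,
        cs A i q.+1 == cs A i.-1 q.+1 + 1 &
        cs A j q.+1 == cs A j.-1 q.+1]].

(* The matrix whose corner sum function is C (second differences of C). *)
Definition from_cs (n : nat) (C : nat -> nat -> int) : 'M[int]_n :=
  \matrix_(p < n, q < n) (C p.+1 q.+1 - C p q.+1 - C p.+1 q + C p q).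

(* The rectangular operator r_{ij}^{kl}: the matrix whose corner sum matrix is
   Atil + Rtil, Atil - Rtil, or Atil, according to the three cases. *)
Definition rect_op (n i j k l : nat) (A : 'M[int]_n) : 'M[int]_n :=
  let d : int :=
    if essential A i j k l then 1
    else if dual_essential A i j k l then -1 else 0 in
  from_cs n (fun p q => cs A p q + d * (inR i j k l p q)%:Z).

(* An n x n integer matrix A is determined by its corner sum function
   C = cs A on [0,n] x [0,n]: C vanishes on the two axes and A is recovered
   as the second differences of C ([from_cs]).  A is an ASM exactly when C
   vanishes on the axes, every unit step of C (in either direction) lies in
   {0,1}, and the unit steps along the last row and column are 1
   ([is_asm_cs]; [cs_asm], [from_cs_asm]).

   Fix a nonempty rectangle R = R_{ij}^{kl} inside the grid.  C has side
   steps (s,t) on R if the unit steps of C entering R through its left and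
   top sides are s and those leaving through its right and bottom sides are
   t; E(A) and E*(A) are exactly side steps (0,1) and (1,0).  Adding d times
   the indicator of R to C only alters the unit steps across the sides of R,
   turning them into s + d and t - d.  Hence C + R (on E(A)) and C - R (on
   E*(A)) are again corner sum functions of ASMs, with the side steps
   swapped.  The involution follows: the second application of r_{ij}^{kl}
   shifts by the opposite sign, since side steps decide whether R is
   essential, dual essential or neither. *)

From HB Require Import structures.
From mathcomp Require Import all_boot all_order all_algebra.
From mathcomp Require Import zify.
Import Order.TTheory GRing.Theory Num.Theory.
Local Open Scope ring_scope.
Set Implicit Arguments. Unset Strict Implicit.

Section CornerSums.
Variable n : nat.
Implicit Types (A X Y : 'M[int]_n) (C : nat -> nat -> int).

Lemma sum_ltS (F : 'I_n -> int) (m : 'I_n) :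
  \sum_(q < n | (q < m.+1)%N) F q = \sum_(q < n | (q < m)%N) F q + F m.
Proof.
rewrite (bigD1 m) ?ltnSn //= addrC; congr (_ + _).
by apply: eq_bigl => q; rewrite ltnS -val_eqE /= [RHS]ltn_neqAle andbC.
Qed.

Lemma sum_telescope (g : nat -> int) m : (m <= n)%N ->
  \sum_(q < n | (q < m)%N) (g q.+1 - g q) = g m - g 0%N.
Proof.
elim: m => [|m IH] hm; first by rewrite big_pred0 ?subrr // => q; rewrite ltn0.
by rewrite (sum_ltS _ (Ordinal hm)) IH ?(ltnW hm) //= addrC addrA subrK.
Qed.

Lemma cs0l A b : cs A 0 b = 0.
Proof. by rewrite /cs big_pred0 // => p; rewrite ltn0. Qed.

Lemma cs0r A a : cs A a 0 = 0.
Proof. by rewrite /cs big1 // => p _; rewrite big_pred0 // => q; rewrite ltn0. Qed.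

Lemma csSl A (p : 'I_n) b :
  cs A p.+1 b = cs A p b + \sum_(q < n | (q < b)%N) A p q.
Proof. by rewrite /cs sum_ltS. Qed.

Lemma csSr A a (q : 'I_n) :
  cs A a q.+1 = cs A a q + \sum_(p < n | (p < a)%N) A p q.
Proof. by rewrite /cs -big_split; apply: eq_bigr => p _; rewrite sum_ltS. Qed.

Lemma row_partial_sum A (p q : 'I_n) :
  \sum_(q' < n | (q' <= q)%N) A p q' = cs A p.+1 q.+1 - cs A p q.+1.
Proof. by rewrite csSl addrAC subrr add0r. Qed.

Lemma col_partial_sum A (p q : 'I_n) :
  \sum_(p' < n | (p' <= p)%N) A p' q = cs A p.+1 q.+1 - cs A p.+1 q.
Proof. by rewrite (csSr _ p.+1) addrAC subrr add0r. Qed.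

Lemma row_sum A (p : 'I_n) : \sum_(q < n) A p q = cs A p.+1 n - cs A p n.
Proof.
rewrite csSl addrAC subrr add0r.
by apply: eq_bigl => q; rewrite ltn_ord.
Qed.

Lemma col_sum A (q : 'I_n) : \sum_(p < n) A p q = cs A n q.+1 - cs A n q.
Proof.
rewrite (csSr _ n) addrAC subrr add0r.
by apply: eq_bigl => p; rewrite ltn_ord.
Qed.

Lemma cs_from_cs C : (forall m, C 0%N m = 0 /\ C m 0%N = 0) ->
  forall a b, (a <= n)%N -> (b <= n)%N -> cs (from_cs n C) a b = C a b.
Proof.
move=> C0; elim=> [|a IH] b ha hb; first by rewrite cs0l (proj1 (C0 b)).
rewrite (csSl _ (Ordinal ha)) /= IH ?(ltnW ha) //.
rewrite (eq_bigr (fun q : 'I_n => (C a.+1 q.+1 - C a q.+1) - (C a.+1 q - C a q)));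
  last by move=> q _; rewrite mxE /=; lia.
rewrite (sum_telescope (fun q => C a.+1 q - C a q)) // !(proj2 (C0 _)); lia.
Qed.

Lemma from_cs_cs A : from_cs n (cs A) = A.
Proof. by apply/matrixP => p q; rewrite mxE !csSl !sum_ltS; lia. Qed.

Lemma from_cs_ext C C' :
  (forall a b, (a <= n)%N -> (b <= n)%N -> C a b = C' a b) ->
  from_cs n C = from_cs n C'.
Proof.
move=> E; apply/matrixP => p q; rewrite !mxE.
by rewrite !E // ?(ltn_ord p) ?(ltn_ord q) ?(ltnW (ltn_ord p)) ?(ltnW (ltn_ord q)).
Qed.

Lemma csm_inj X Y : csm X = csm Y -> X = Y.
Proof.
move=> E; rewrite -(from_cs_cs X) -(from_cs_cs Y); apply: from_cs_ext.
move=> [|a] [|b] ha hb; rewrite ?cs0l ?cs0r //.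
by have := congr1 (fun M : 'M[int]_n => M (Ordinal ha) (Ordinal hb)) E; rewrite !mxE.
Qed.

Definition is_asm_cs C : Prop :=
  [/\ forall m, C 0%N m = 0 /\ C m 0%N = 0,
      forall a b, (a < n)%N -> (b <= n)%N -> C a.+1 b - C a b \in [:: 0; 1],
      forall a b, (a <= n)%N -> (b < n)%N -> C a b.+1 - C a b \in [:: 0; 1],
      forall a, (a < n)%N -> C a.+1 n - C a n = 1 &
      forall b, (b < n)%N -> C n b.+1 - C n b = 1].

Lemma cs_asm A : is_asm A -> is_asm_cs (cs A).
Proof.
case=> _ rows cols rowsf colsf; split.
- by move=> m; rewrite cs0l cs0r.
- move=> a [|b] ha hb; first by rewrite !cs0r subrr inE.
  by have := rows (Ordinal ha) (Ordinal hb); rewrite row_partial_sum.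
- move=> [|a] b ha hb; first by rewrite !cs0l subrr inE.
  by have := cols (Ordinal ha) (Ordinal hb); rewrite col_partial_sum.
- by move=> a ha; have := rowsf (Ordinal ha); rewrite row_sum.
- by move=> b hb; have := colsf (Ordinal hb); rewrite col_sum.
Qed.

Lemma from_cs_asm C : is_asm_cs C -> is_asm (from_cs n C).
Proof.
case=> C0 rows cols rowsf colsf.
have csC := cs_from_cs C0.
have ltSn (p : 'I_n) : (p.+1 <= n)%N := ltn_ord p.
have lePn (p : 'I_n) : (p <= n)%N := ltnW (ltn_ord p).
split.
- move=> p q; rewrite mxE.
  have := rows p q.+1 (ltn_ord p) (ltSn q); have := rows p q (ltn_ord p) (lePn q).
  by rewrite !inE; lia.
- by move=> p q; rewrite row_partial_sum !csC //; apply: rows.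
- by move=> p q; rewrite col_partial_sum !csC //; apply: cols.
- by move=> p; rewrite row_sum !csC //; apply: rowsf.
- by move=> q; rewrite col_sum !csC //; apply: colsf.
Qed.

End CornerSums.

Section Rectangle.
Variables (n i j k l : nat).
Hypotheses (Hi : (1 <= i)%N) (Hij : (i < j)%N) (Hjn : (j <= n)%N)
  (Hk : (1 <= k)%N) (Hkl : (k < l)%N) (Hln : (l <= n)%N).
Implicit Types (A : 'M[int]_n) (C : nat -> nat -> int) (d s t : int).

Local Notation R := (inR i j k l).

Definition add_rect C d : nat -> nat -> int := fun a b => C a b + d * (R a b)%:Z.

Lemma add_rect_out C d a b : ~~ R a b -> add_rect C d a b = C a b.
Proof. by rewrite /add_rect => /negbTE ->; rewrite mulr0 addr0. Qed.

(* The indicator of R only has nonzero vertical unit steps across the top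
   row i and the bottom row j of R, and nonzero horizontal ones across its
   left column k and right column l. *)
Lemma add_rect_row_step C d a b :
  add_rect C d a.+1 b - add_rect C d a b =
  C a.+1 b - C a b + d * ((k <= b < l)%N%:Z * ((a.+1 == i)%:Z - (a.+1 == j)%:Z)).
Proof.
have -> : (k <= b < l)%N%:Z * ((a.+1 == i)%:Z - (a.+1 == j)%:Z) = (R a.+1 b)%:Z - (R a b)%:Z.
  by rewrite /inR; lia.
by rewrite /add_rect mulrBr addrACA opprD.
Qed.

Lemma add_rect_col_step C d a b :
  add_rect C d a b.+1 - add_rect C d a b =
  C a b.+1 - C a b + d * ((i <= a < j)%N%:Z * ((b.+1 == k)%:Z - (b.+1 == l)%:Z)).
Proof.
have -> : (i <= a < j)%N%:Z * ((b.+1 == k)%:Z - (b.+1 == l)%:Z) = (R a b.+1)%:Z - (R a b)%:Z.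
  by rewrite /inR; lia.
by rewrite /add_rect mulrBr addrACA opprD.
Qed.

Definition side_steps C s t : Prop := forall a b, R a b ->
  [/\ C a k = C a k.-1 + s, C a l = C a l.-1 + t,
      C i b = C i.-1 b + s & C j b = C j.-1 b + t].

(* Since R is nonempty, the entering side step is determined by C. *)
Lemma side_steps_unique C s t s' t' :
  side_steps C s t -> side_steps C s' t' -> s = s'.
Proof.
have Rik : R i k by rewrite /inR; lia.
by move=> /(_ i k Rik) [+ _ _ _] /(_ i k Rik) [+ _ _ _] => -> /addrI.
Qed.

Lemma add_rect_side_steps C d s t :
  side_steps C s t -> side_steps (add_rect C d) (s + d) (t - d).
Proof.
move=> side a b Rab; have [left right top bottom] := side a b Rab.
move: Rab; rewrite /add_rect /inR => Rab; split; lia.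
Qed.

Lemma add_rect_row_steps C d s t :
  side_steps C s t -> s + d \in [:: 0; 1] -> t - d \in [:: 0; 1] ->
  forall a b, C a.+1 b - C a b \in [:: 0; 1] ->
  add_rect C d a.+1 b - add_rect C d a b \in [:: 0; 1].
Proof.
move=> side sd td a b step; rewrite add_rect_row_step.
case kb: (k <= b < l)%N; last by rewrite mul0r mulr0 addr0.
have Rib : R i b by rewrite /inR; lia.
have [_ _ top bottom] := side i b Rib.
case: (eqVneq a.+1 i) => [ai | ai].
  have aj : (a.+1 == j) = false by rewrite ai ltn_eqF.
  rewrite -ai /= in top; rewrite aj top.
  by move: sd; rewrite !inE; lia.
case: (eqVneq a.+1 j) => [aj | aj].
  rewrite -aj /= in bottom; rewrite bottom.
  by move: td; rewrite !inE; lia.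
by rewrite subrr !mulr0 addr0.
Qed.

Lemma add_rect_col_steps C d s t :
  side_steps C s t -> s + d \in [:: 0; 1] -> t - d \in [:: 0; 1] ->
  forall a b, C a b.+1 - C a b \in [:: 0; 1] ->
  add_rect C d a b.+1 - add_rect C d a b \in [:: 0; 1].
Proof.
move=> side sd td a b step; rewrite add_rect_col_step.
case ia: (i <= a < j)%N; last by rewrite mul0r mulr0 addr0.
have Rak : R a k by rewrite /inR; lia.
have [left right _ _] := side a k Rak.
case: (eqVneq b.+1 k) => [bk | bk].
  have bl : (b.+1 == l) = false by rewrite bk ltn_eqF.
  rewrite -bk /= in left; rewrite bl left.
  by move: sd; rewrite !inE; lia.
case: (eqVneq b.+1 l) => [bl | bl].
  rewrite -bl /= in right; rewrite right.
  by move: td; rewrite !inE; lia.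
by rewrite subrr !mulr0 addr0.
Qed.

Lemma add_rect_asm C d s t :
  is_asm_cs n C -> side_steps C s t ->
  s + d \in [:: 0; 1] -> t - d \in [:: 0; 1] -> is_asm_cs n (add_rect C d).
Proof.
case=> C0 rows cols rowsf colsf side sd td; split.
- move=> m; have [C0m Cm0] := C0 m.
  by rewrite !add_rect_out ?C0m ?Cm0 // /inR; lia.
- by move=> a b ha hb; apply: add_rect_row_steps side sd td a b (rows a b ha hb).
- by move=> a b ha hb; apply: add_rect_col_steps side sd td a b (cols a b ha hb).
- by move=> a ha; rewrite !add_rect_out ?rowsf // /inR; lia.
- by move=> b hb; rewrite !add_rect_out ?colsf // /inR; lia.
Qed.

Lemma rect_forallP (P : nat -> nat -> bool) :
  reflect (forall a b, R a b -> P a b)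
          [forall p : 'I_n, forall q : 'I_n, R p.+1 q.+1 ==> P p.+1 q.+1].
Proof.
apply: (iffP forallP) => [H [|a] [|b] Rab | H p]; try by move: Rab; rewrite /inR; lia.
  have ha : (a < n)%N by move: Rab; rewrite /inR; lia.
  have hb : (b < n)%N by move: Rab; rewrite /inR; lia.
  by move: (H (Ordinal ha)) => /forallP /(_ (Ordinal hb)) /implyP; apply.
by apply/forallP => q; apply/implyP; apply: H.
Qed.

Lemma essentialP A : essential A i j k l <-> side_steps (cs A) 0 1.
Proof.
pose P a b := [&& cs A a k == cs A a k.-1, cs A a l == cs A a l.-1 + 1,
                  cs A i b == cs A i.-1 b & cs A j b == cs A j.-1 b + 1].
split=> [/(rect_forallP P) H a b /H | H]; last first.
  by apply/(rect_forallP P) => a b /H [h1 h2 h3 h4]; rewrite /P h1 h2 h3 h4 !addr0 !eqxx.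
by rewrite /P => /and4P [/eqP h1 /eqP h2 /eqP h3 /eqP h4]; split; rewrite ?addr0.
Qed.

Lemma dual_essentialP A : dual_essential A i j k l <-> side_steps (cs A) 1 0.
Proof.
pose P a b := [&& cs A a k == cs A a k.-1 + 1, cs A a l == cs A a l.-1,
                  cs A i b == cs A i.-1 b + 1 & cs A j b == cs A j.-1 b].
split=> [/(rect_forallP P) H a b /H | H]; last first.
  by apply/(rect_forallP P) => a b /H [h1 h2 h3 h4]; rewrite /P h1 h2 h3 h4 !addr0 !eqxx.
by rewrite /P => /and4P [/eqP h1 /eqP h2 /eqP h3 /eqP h4]; split; rewrite ?addr0.
Qed.

Definition rect_shift A d : 'M[int]_n := from_cs n (add_rect (cs A) d).

Lemma cs_rect_shift A d a b : (a <= n)%N -> (b <= n)%N ->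
  cs (rect_shift A d) a b = add_rect (cs A) d a b.
Proof.
apply: cs_from_cs => m.
by rewrite !add_rect_out ?cs0l ?cs0r // /inR; lia.
Qed.

Lemma csm_rect_shift A d : csm (rect_shift A d) = csm A + d *: Rt n i j k l.
Proof. by apply/matrixP => p q; rewrite !mxE cs_rect_shift. Qed.

Lemma side_steps_rect_shift A d s t :
  side_steps (cs A) s t -> side_steps (cs (rect_shift A d)) (s + d) (t - d).
Proof.
move=> side a b Rab; rewrite !cs_rect_shift; first exact: add_rect_side_steps side a b Rab.
all: by move: Rab; rewrite /inR; lia.
Qed.

Lemma rect_shiftK A d : rect_shift (rect_shift A d) (- d) = A.
Proof.
rewrite -[RHS]from_cs_cs; apply: from_cs_ext => a b ha hb.
by rewrite /add_rect cs_rect_shift // /add_rect mulNr addrK.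
Qed.

Lemma rect_shift0 A : rect_shift A 0 = A.
Proof.
rewrite -[RHS]from_cs_cs; apply: from_cs_ext => a b _ _.
by rewrite /add_rect mul0r addr0.
Qed.

Lemma rect_shift_asm A d s t :
  is_asm A -> side_steps (cs A) s t ->
  s + d \in [:: 0; 1] -> t - d \in [:: 0; 1] -> is_asm (rect_shift A d).
Proof. by move=> /cs_asm asmA side sd td; apply/from_cs_asm/(add_rect_asm asmA side). Qed.

Lemma rect_shift_unique A d : is_asm (rect_shift A d) ->
  exists! B : 'M[int]_n, is_asm B /\ csm B = csm A + d *: Rt n i j k l.
Proof.
move=> asmB; exists (rect_shift A d); split; first by split; rewrite ?csm_rect_shift.
by move=> B [_ csmB]; apply: csm_inj; rewrite csmB csm_rect_shift.
Qed.

Definition rect_sign A : int :=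
  if essential A i j k l then 1 else if dual_essential A i j k l then -1 else 0.

Lemma rect_opE A : rect_op i j k l A = rect_shift A (rect_sign A).
Proof. by []. Qed.

(* r_{ij}^{kl} turns an essential rectangle into a dual essential one and
   vice versa, and fixes A when R is neither; so its sign flips. *)
Lemma rect_sign_flip A : rect_sign (rect_shift A (rect_sign A)) = - rect_sign A.
Proof.
rewrite /rect_sign; case ess: (essential A i j k l);
  last case dual: (dual_essential A i j k l) => /=.
- have := side_steps_rect_shift 1 ((essentialP A).1 ess); rewrite add0r subrr => side.
  have -> : essential (rect_shift A 1) i j k l = false.
    by apply/negP => /essentialP /(side_steps_unique side); lia.
  by rewrite ((dual_essentialP _).2 side).
- have := side_steps_rect_shift (-1) ((dual_essentialP A).1 dual).
  by rewrite addrN sub0r opprK => /essentialP ->.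
- by rewrite rect_shift0 ess dual oppr0.
Qed.

(* r_{ij}^{kl} is an involution (on all integer matrices, not only ASMs). *)
Lemma rect_op_involutive A : rect_op i j k l (rect_op i j k l A) = A.
Proof. by rewrite !rect_opE rect_sign_flip rect_shiftK. Qed.

Lemma essential_rect_shift A : is_asm A -> essential A i j k l ->
  exists! B : 'M[int]_n, is_asm B /\ csm B = csm A + Rt n i j k l.
Proof.
move=> asmA /essentialP side; rewrite -[Rt _ _ _ _ _]scale1r.
by apply/rect_shift_unique/(rect_shift_asm asmA side); rewrite !inE.
Qed.

Lemma dual_essential_rect_shift A : is_asm A -> dual_essential A i j k l ->
  exists! B : 'M[int]_n, is_asm B /\ csm B = csm A - Rt n i j k l.
Proof.
move=> asmA /dual_essentialP side; rewrite -[- Rt _ _ _ _ _]scaleN1r.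
by apply/rect_shift_unique/(rect_shift_asm asmA side); rewrite !inE.
Qed.

End Rectangle.

Theorem mainTheorem2 (n : nat) (A : 'M[int]_n) (i j k l : nat) :
  is_asm A ->
  (1 <= i)%N -> (i < j)%N -> (j <= n)%N ->
  (1 <= k)%N -> (k < l)%N -> (l <= n)%N ->
  [/\ (essential A i j k l ->
         exists! B : 'M[int]_n, is_asm B /\ csm B = csm A + Rt n i j k l),
      (dual_essential A i j k l ->
         exists! B : 'M[int]_n, is_asm B /\ csm B = csm A - Rt n i j k l) &
      rect_op i j k l (rect_op i j k l A) = A].
Proof.
move=> asmA Hi Hij Hjn Hk Hkl Hln; split.
- exact: essential_rect_shift.
- exact: dual_essential_rect_shift.
- exact: rect_op_involutive.
Qed.
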